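(* For every prime power $q$, all integers $n$, $r\le\lfloor n/2\rfloor$ and $0<\rho<r$, $$K_{\mathrm{C}}(q,n,r,\rho)\le\binom{n}{r}K_{\mathrm{R}}(q^{n-r},r,\rho).$$
   Context: $E_r(q,n)$ is the set of $r$-dimensional subspaces of $\mathrm{GF}(q)^n$ with injection distance $d_{\mathrm{I}}(U,V)=\dim(U+V)-\min\{\dim U,\dim V\}$; the covering radius of a nonempty $\mathcal{C}\subseteq E_r(q,n)$ is $\max_U\min_{C\in\mathcal{C}}d_{\mathrm{I}}(U,C)$, and $K_{\mathrm{C}}(q,n,r,\rho)$ is the minimum cardinality of a subset of $E_r(q,n)$ with covering radius at most $\rho$. The rank distance on $\mathrm{GF}(q)^{m\times N}$ is $d_{\mathrm{R}}({\bf C},{\bf D})=\mathrm{rk}({\bf C}-{\bf D})$; $K_{\mathrm{R}}(q^m,N,\rho)$ is the minimum cardinality of a set $\mathcal{C}\subseteq\mathrm{GF}(q)^{m\times N}$ such that every matrix in $\mathrm{GF}(q)^{m\times N}$ is within rank distance $\rho$ of some element of $\mathcal{C}$. *)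

From HB Require Import structures.
From mathcomp Require Import all_boot all_order all_algebra all_field.

Set Implicit Arguments. Unset Strict Implicit. Unset Printing Implicit Defensive.
Import GRing.Theory.
Local Open Scope ring_scope.

(* Subspaces of F^n are represented canonically by square matrices A with
   <<A>>%MS = A (their row space is the subspace).  This gives a finite type. *)
Definition is_subspace_mx (F : fieldType) (n : nat) (A : 'M[F]_n) : bool :=
  (<<A>>%MS == A).

Definition Er (F : finFieldType) (n r : nat) : {set 'M[F]_n} :=
  [set A : 'M[F]_n | is_subspace_mx A && (\rank A == r)%N].

Definition dI (F : fieldType) (n : nat) (U V : 'M[F]_n) : nat :=
  (\rank (U + V)%MS - minn (\rank U) (\rank V))%N.

Definition subspace_covering (F : finFieldType) (n r rho : nat)
    (C : {set 'M[F]_n}) : bool :=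
  [&& C \subset Er F n r, C != set0 &
      [forall U in Er F n r, exists D in C, (dI U D <= rho)%N]].

Definition K_C (F : finFieldType) (n r rho : nat) : nat :=
  \big[minn/#|Er F n r|]_(C : {set 'M[F]_n} | subspace_covering r rho C) #|C|.

Definition rank_covering (F : finFieldType) (m N rho : nat)
    (C : {set 'M[F]_(m, N)}) : bool :=
  [forall A : 'M[F]_(m, N), exists D in C, (\rank (A - D)%R <= rho)%N].

Definition K_R (F : finFieldType) (m N rho : nat) : nat :=
  \big[minn/#|'M[F]_(m, N)|]_(C : {set 'M[F]_(m, N)} | rank_covering rho C) #|C|.

(* Every r-dimensional subspace U of F^n has an information set: r coordinates
   S on which the projection of U is bijective.  U is then the row space of a
   unique generator matrix in systematic form w.r.t. S, i.e. the identity on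
   the columns S and an arbitrary (n-r) x r matrix Y^T on the other columns.
   Two subspaces in systematic form w.r.t. the same S differ by a matrix of
   rank at most rank (Y - X), and the injection distance is bounded by that
   rank.  Hence a rank-metric covering code of radius rho in F^{(n-r) x r},
   used once for each of the 'C(n, r) choices of S, yields a subspace covering
   code of radius rho. *)

From mathcomp Require Import all_boot all_order all_algebra all_field zify.

Set Implicit Arguments.
Unset Strict Implicit.
Unset Printing Implicit Defensive.
Import GRing.Theory.
Local Open Scope ring_scope.

Definition selmx (R : nzRingType) n m (f : 'I_m -> 'I_n) : 'M[R]_(n, m) :=
  colsub f 1%:M.

Lemma mulmx_selmx (R : nzRingType) p n m (f : 'I_m -> 'I_n) (A : 'M[R]_(p, n)) :
  A *m selmx R f = colsub f A.
Proof. by rewrite mulmx_colsub mulmx1. Qed.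

Lemma trmx_selmx (R : nzRingType) n m (f : 'I_m -> 'I_n) :
  (selmx R f)^T = rowsub f 1%:M.
Proof. by rewrite trmx_mxsub trmx1. Qed.

Lemma selmx_tr_selmx (R : nzRingType) n m p
    (f : 'I_m -> 'I_n) (g : 'I_p -> 'I_n) :
  (selmx R f)^T *m selmx R g = \matrix_(i, k) (f i == g k)%:R.
Proof.
rewrite trmx_selmx mul_rowsub_mx mul1mx.
by apply/matrixP => i k; rewrite !mxE.
Qed.

Lemma selmx_selmx_tr (R : nzRingType) n m (f : 'I_m -> 'I_n) : injective f ->
  selmx R f *m (selmx R f)^T =
    \matrix_(j, j') ((j == j') && (j \in codom f))%:R.
Proof.
move=> f_inj; apply/matrixP => j j'; rewrite !mxE.
have [/codomP[i ->]|not_fj] := boolP (j \in codom f).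
  rewrite (bigD1 i) //= big1 => [|i' ne_i'i]; rewrite !mxE.
    by rewrite eqxx mul1r addr0 andbT eq_sym.
  by rewrite (inj_eq f_inj) eq_sym (negPf ne_i'i) mul0r.
rewrite andbF big1 // => i _; rewrite !mxE.
have [ej|] := eqP; last by rewrite mul0r.
by case/negP: not_fj; rewrite ej codom_f.
Qed.

Section Systematic.

Variables (F : fieldType) (n r : nat).
Variables (g : 'I_r -> 'I_n) (h : 'I_(n - r) -> 'I_n).

(* The generator matrix in systematic form: columns [g i] carry the identity,
   columns [h k] carry [X^T]. *)
Definition sysmx (X : 'M[F]_(n - r, r)) : 'M[F]_(r, n) :=
  (selmx F g)^T + X^T *m (selmx F h)^T.

Hypotheses (g_inj : injective g) (h_inj : injective h).
Hypothesis codom_h : forall j, (j \in codom h) = (j \notin codom g).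

Lemma selmx_tr_selmx_id : (selmx F g)^T *m selmx F g = 1%:M.
Proof.
by rewrite selmx_tr_selmx; apply/matrixP => i k; rewrite !mxE (inj_eq g_inj).
Qed.

Lemma selmx_tr_selmx_compl : (selmx F h)^T *m selmx F g = 0.
Proof.
rewrite selmx_tr_selmx; apply/matrixP => i k; rewrite !mxE.
case: eqP => // hi_gk.
by have := codom_f h i; rewrite codom_h hi_gk codom_f.
Qed.

Lemma selmx_partition :
  selmx F g *m (selmx F g)^T + selmx F h *m (selmx F h)^T = 1%:M.
Proof.
rewrite !selmx_selmx_tr //; apply/matrixP => j j'; rewrite !mxE codom_h.
by case: (j == j'); case: (j \in codom g); rewrite /= ?addr0 ?add0r.
Qed.

Lemma sysmx_mul_selmx X : sysmx X *m selmx F g = 1%:M.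
Proof.
by rewrite mulmxDl selmx_tr_selmx_id -mulmxA selmx_tr_selmx_compl mulmx0 addr0.
Qed.

Lemma rank_sysmx X : \rank (sysmx X) = r.
Proof.
apply/eqP; rewrite eqn_leq rank_leq_row /=.
by rewrite -{1}(mxrank1 F r) -(sysmx_mul_selmx X) mxrankM_maxl.
Qed.

Lemma rank_sysmxB X Y : (\rank (sysmx Y - sysmx X)%R <= \rank (Y - X)%R)%N.
Proof.
rewrite /sysmx opprD addrACA subrr add0r -mulmxBl -linearB /=.
by rewrite -[\rank (Y - X)]mxrank_tr mxrankM_maxl.
Qed.

Lemma eqmx_sysmx m (U : 'M[F]_(m, n)) :
  \rank U = r -> \rank (U *m selmx F g) = r -> exists Y, (U :=: sysmx Y)%MS.
Proof.
move=> rkU rkUg.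
have /row_fullP[Z ZUg] : row_full (U *m selmx F g) by rewrite /row_full rkUg.
set B := Z *m U; exists (B *m selmx F h)^T.
have defB : B = sysmx (B *m selmx F h)^T.
  rewrite /sysmx trmxK -[LHS]mulmx1 -selmx_partition mulmxDr !mulmxA.
  by rewrite /B -(mulmxA Z U) ZUg mul1mx.
rewrite -defB; apply/eqmx_sym/eqmxP.
by rewrite -(mxrank_leqif_eq (submxMl Z U)).2 -/B defB rank_sysmx rkU.
Qed.

End Systematic.

(* [x0] is a dummy default for [nth]; it is never reached when [m = #|S|]. *)
Definition setenum n (x0 : 'I_n) (S : {set 'I_n}) m : 'I_m -> 'I_n :=
  fun i => nth x0 (enum S) i.
Arguments setenum {n} x0 S m.

Lemma setenum_inj n x0 (S : {set 'I_n}) m :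
  #|S| = m -> injective (setenum x0 S m).
Proof.
move=> cardS i j /eqP; rewrite nth_uniq ?enum_uniq -?cardE ?cardS //.
by move/eqP/val_inj.
Qed.

Lemma codom_setenum n x0 (S : {set 'I_n}) m :
  #|S| = m -> codom (setenum x0 S m) =i S.
Proof.
move=> cardS x; apply/codomP/idP => [[i ->]|Sx].
  by rewrite -mem_enum mem_nth // -cardE cardS.
have ltx : (index x (enum S) < m)%N by rewrite -cardS cardE index_mem mem_enum.
by exists (Ordinal ltx); rewrite /setenum nth_index // mem_enum.
Qed.

Lemma exists_info_set (F : fieldType) m n x0 r (U : 'M[F]_(m, n)) :
  \rank U = r ->
  exists2 S : {set 'I_n}, #|S| = r & \rank (U *m selmx F (setenum x0 S r)) = r.
Proof.
move=> rkU; set f := maxrankfun U^T.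
set S := [set f i | i in 'I_(\rank U^T)].
have cardS : #|S| = r.
  by rewrite card_imset ?card_ord ?mxrank_tr //; exact: maxrankfun_inj.
exists S => //; apply/eqP; rewrite eqn_leq rank_leq_col /=.
rewrite mulmx_selmx -mxrank_tr trmx_mxsub -[X in (X <= _)%N]rkU -mxrank_tr.
rewrite -(eq_maxrowsub U^T) mxrankS //.
apply/row_subP => i; rewrite row_rowsub.
have /codomP[k ->] : f i \in codom (setenum x0 S r).
  by rewrite codom_setenum // imset_f.
by rewrite -row_rowsub row_sub.
Qed.

Lemma rank_adds_le_subr (F : fieldType) m n (A B : 'M[F]_(m, n)) :
  (\rank (A + B)%MS <= \rank (A - B)%R + \rank B)%N.
Proof.
apply: leq_trans (mxrank_adds_leqif _ _).1; apply: mxrankS.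
rewrite addsmx_sub addsmxSr andbT -{1}(subrK B A).
exact: addmx_sub_adds.
Qed.

Lemma rank_adds_sub_min (F : fieldType) m n (A B : 'M[F]_(m, n)) :
  (\rank (A + B)%MS - minn (\rank A) (\rank B) <= \rank (A - B)%R)%N.
Proof.
have leB := rank_adds_le_subr A B.
have leA := rank_adds_le_subr B A.
rewrite addsmxC -(mxrank_opp (B - A)) opprB in leA.
by rewrite leq_subLR addn_minl leq_min -!(addnC (\rank (A - B)%R)) leA leB.
Qed.

Lemma dI_eqmx (F : finFieldType) n m (U V : 'M[F]_n) (A B : 'M[F]_(m, n)) :
  (U :=: A)%MS -> (V :=: B)%MS ->
  dI U V = (\rank (A + B)%MS - minn (\rank A) (\rank B))%N.
Proof. by move=> eqUA eqVB; rewrite /dI (adds_eqmx eqUA eqVB) eqUA eqVB. Qed.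

Section SystematicCode.

Variables (F : finFieldType) (n r : nat) (x0 : 'I_n).

Definition sysmx_of (S : {set 'I_n}) (X : 'M[F]_(n - r, r)) : 'M[F]_(r, n) :=
  sysmx (setenum x0 S r) (setenum x0 (~: S) (n - r)) X.

Definition sys_code (R : {set 'M[F]_(n - r, r)}) : {set 'M[F]_n} :=
  \bigcup_(S : {set 'I_n} | #|S| == r) [set <<sysmx_of S X>>%MS | X in R].

Section FixedSupport.

Variable S : {set 'I_n}.
Hypothesis cardS : #|S| = r.

Let cardSC : #|~: S| = (n - r)%N.
Proof. by rewrite cardsCs setCK card_ord cardS. Qed.

Let setenum_S_inj : injective (setenum x0 S r).
Proof. exact: setenum_inj. Qed.

Let setenum_SC_inj : injective (setenum x0 (~: S) (n - r)).
Proof. exact: setenum_inj. Qed.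

Let codom_setenum_SC j :
  (j \in codom (setenum x0 (~: S) (n - r))) = (j \notin codom (setenum x0 S r)).
Proof. by rewrite codom_setenum // codom_setenum // in_setC. Qed.

Lemma rank_sysmx_of X : \rank (sysmx_of S X) = r.
Proof. exact: rank_sysmx. Qed.

Lemma rank_sysmx_ofB X Y :
  (\rank (sysmx_of S Y - sysmx_of S X)%R <= \rank (Y - X)%R)%N.
Proof. exact: rank_sysmxB. Qed.

Lemma eqmx_sysmx_of m (U : 'M[F]_(m, n)) :
  \rank U = r -> \rank (U *m selmx F (setenum x0 S r)) = r ->
  exists Y, (U :=: sysmx_of S Y)%MS.
Proof. exact: eqmx_sysmx. Qed.

End FixedSupport.

Variable R : {set 'M[F]_(n - r, r)}.

Lemma card_sys_code : (#|sys_code R| <= 'C(n, r) * #|R|)%N.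
Proof.
rewrite -[n in 'C(n, _)]card_ord -card_draws -sum_nat_const.
rewrite [X in (_ <= X)%N](eq_bigl (fun S : {set 'I_n} => #|S| == r)) => [|S];
  last by rewrite inE.
rewrite /sys_code; elim/big_rec2: _ => [|S k C _ leC]; first by rewrite cards0.
exact: leq_trans (leq_card_setU _ _).1 (leq_add (leq_imset_card _ _) leC).
Qed.

Lemma sys_code_sub : sys_code R \subset Er F n r.
Proof.
apply/subsetP => D /bigcupP[S /eqP cardS /imsetP[X _ ->]].
rewrite /Er inE /is_subspace_mx genmx_id mxrank_gen (rank_sysmx_of cardS).
by rewrite !eqxx.
Qed.

Lemma sys_code_covers rho : rank_covering rho R ->
  forall U, U \in Er F n r -> exists2 D, D \in sys_code R & (dI U D <= rho)%N.
Proof.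
move=> covR U; rewrite /Er inE => /andP[_ /eqP rkU].
have [S cardS rkUS] := exists_info_set x0 rkU.
have [Y eqUY] := eqmx_sysmx_of cardS rkU rkUS.
have /existsP[X /andP[RX leXY]] := forallP covR Y.
exists <<sysmx_of S X>>%MS.
  by apply/bigcupP; exists S; [apply/eqP | apply: imset_f].
rewrite (dI_eqmx eqUY (genmxE _)).
apply: leq_trans (rank_adds_sub_min _ _) _.
exact: leq_trans (rank_sysmx_ofB _ _ _) leXY.
Qed.

Lemma subspace_covering_sys_code rho :
  (r <= n)%N -> rank_covering rho R -> subspace_covering r rho (sys_code R).
Proof.
move=> le_rn covR; apply/and3P; split; first exact: sys_code_sub.
  have /existsP[X /andP[RX _]] := forallP covR 0.
  have /card_gt0P[S] : (0 < #|[set S : {set 'I_n} | #|S| == r]|)%N.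
    by rewrite card_draws card_ord bin_gt0.
  rewrite inE => cardS; apply/set0Pn; exists <<sysmx_of S X>>%MS.
  by apply/bigcupP; exists S => //; apply: imset_f.
apply/forall_inP => U EU; have [D codeD leUD] := sys_code_covers covR EU.
by apply/exists_inP; exists D.
Qed.

End SystematicCode.
Local Close Scope ring_scope.

Lemma bigmin_le (I : finType) (P : pred I) (F : I -> nat) d j :
  P j -> \big[minn/d]_(i | P i) F i <= F j.
Proof.
move=> Pj; rewrite -big_filter.
have : j \in filter P (index_enum I) by rewrite mem_filter Pj mem_index_enum.
elim: (filter P _) => [//|x s IH]; rewrite inE big_cons => /predU1P[<-|js].
  exact: geq_minl.
exact: leq_trans (geq_minr _ _) (IH js).
Qed.

Lemma bigmin_attained (I : finType) (P : pred I) (F : I -> nat) d j :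
  P j -> F j <= d -> exists2 i, P i & F i <= \big[minn/d]_(k | P k) F k.
Proof.
move=> Pj le_jd; have [i Pi minFi] := arg_minnP F Pj.
exists i => //; elim/big_ind: _ => [|x y lex ley|k /minFi //].
  exact: leq_trans (minFi _ Pj) le_jd.
by rewrite leq_min lex ley.
Qed.

Theorem proposition12 (F : finFieldType) (n r rho : nat) :
  (r <= n./2)%N -> (0 < rho)%N -> (rho < r)%N ->
  (K_C F n r rho <= 'C(n, r) * K_R F (n - r) r rho)%N.
Proof.
move=> le_r_half _ lt_rho_r.
have le_rn : r <= n.
  by apply: leq_trans le_r_half _; rewrite leq_half_double -addnn; lia.
have x0 : 'I_n by exists 0; lia.
have covT : rank_covering rho [set: 'M[F]_(n - r, r)].
  apply/forallP => A; apply/exists_inP; exists A; first by rewrite inE.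
  by rewrite subrr mxrank0.
have [R covR leRK] : exists2 R : {set 'M[F]_(n - r, r)},
    rank_covering rho R & #|R| <= K_R F (n - r) r rho.
  exact: bigmin_attained covT (max_card _).
apply: leq_trans (bigmin_le _ _ (subspace_covering_sys_code x0 le_rn covR)) _.
exact: leq_trans (card_sys_code x0 R) (leq_mul _ leRK).
Qed.
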